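(* Let $P\ge 1$ be an integer, let $\Delta x,\Delta t>0$, and let $U^*:\mathbb{R}\to\mathbb{R}^d$ be a continuous stationary solution of the balance law $U_t+F(U)_x=S(U)H_x$, i.e. $F(U^* )_x=S(U^* )H_x$. Assume that for every node $x_i$ the solution of the Cauchy problem $F(V)_x=S(V)H_x$, $V(x_i)=U^*(x_i)$, is unique on the nodes used by the scheme, so that the local equilibrium used by the scheme at node $i$ is $U^*_i=U^*$. If the WBCAT$2P$ scheme described in the context is applied with initial data $U^0_i=U^*(x_i)$ for all $i\in\mathbb{Z}$, then $U^n_i=U^0_i$ for all $i\in\mathbb{Z}$ and all $n\ge 0$.
   Context: Setting: $U:\mathbb{R}\times[0,\infty)\to\mathbb{R}^d$, $F,S:\mathbb{R}^d\to\mathbb{R}^d$ smooth, $H:\mathbb{R}\to\mathbb{R}$ smooth and known, $H_x=H'$. Uniform grid $x_l=l\Delta x$, $l\in\mathbb{Z}$; $U^n_l$ approximates $U(x_l,n\Delta t)$. Numerical differentiation weights: for integers $k\ge 0$ and real $q$, $\gamma^{k,q}_{P,j}$ ($j=-P+1,\dots,P$) are the unique weights such that $\frac{1}{h^k}\sum_{j=-P+1}^{P}\gamma^{k,q}_{P,j} f(x_0+jh)$ equals the $k$-th derivative at $x_0+qh$ of the polynomial of degree $\le 2P-1$ interpolating $f$ at $x_0+jh$, $j=-P+1,\dots,P$ (so $k=0$ is Lagrange interpolation). Quadrature weights: for each $m$ and $j=-P+2,\dots,P$, $a^{m,j}_{P,l}$ ($l=-P+1,\dots,P$) are weights of the interpolatory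 rule $\int_{x_{m+j-1}}^{x_{m+j}} f\,dx\approx \Delta x\sum_{l=-P+1}^P a^{m,j}_{P,l} f(x_{m+l})$ with nodes $x_{m+l}$. WBCAT$2P$ scheme. Given $U^n$, for each $i$ let $U^*_i$ be the stationary solution with $U^*_i(x_i)=U^n_i$. For each $m\in\{i-1,i\}$ compute, with indices $j,s,l,r\in\{-P+1,\dots,P\}$: (0) $F^{(0)}_{j}=F(U^n_{m+j})-F(U^*_i(x_{m+j}))$; for $j=-P+2,\dots,P$, $\tilde I^{(0)}_{j-1,j}=\Delta x\sum_l a^{m,j}_{P,l}\big(S(U^n_{m+l})-S(U^*_i(x_{m+l}))\big)H_x(x_{m+l})$; and $\tilde I^{(0)}_{-P+1,j}=\sum_{s=-P+2}^{j}\tilde I^{(0)}_{s-1,s}$ (which is $0$ for $j=-P+1$). (1) For $k=1,\dots,2P-1$: $U^{(k)}_j=-\frac{1}{\Delta x}\sum_s\gamma^{1,j}_{P,s}F^{(k-1)}_s+\frac{1}{\Delta x}\sum_s\gamma^{1,j}_{P,s}\tilde I^{(k-1)}_{-P+1,s}$; $U^{k,r}_j=U^n_{m+j}+\sum_{q=1}^{k}\frac{(r\Delta t)^q}{q!}U^{(q)}_j$; $F^{(k)}_j=\frac{1}{\Delta t^k}\sum_r\gamma^{k,0}_{P,r}F(U^{k,r}_j)$; for $j=-P+2,\dots,P$, $\tilde I^{(k)}_{j-1,j}=\frac{1}{\Delta t^k}\sum_r\gamma^{k,0}_{P,r}\,\Delta x\sum_l a^{m,j}_{P,l}S(U^{k,r}_l)H_x(x_{m+l})$;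 and $\tilde I^{(k)}_{-P+1,j}=\sum_{s=-P+2}^{j}\tilde I^{(k)}_{s-1,s}$. (2) Flux: $F_{i;m+1/2}=\sum_{k=1}^{2P}\frac{\Delta t^{k-1}}{k!}\sum_j\gamma^{0,1/2}_{P,j}F^{(k-1)}_j$ (quantities computed with this $m$). (3) Source: for $k=1,\dots,2P$ let $\tilde{\mathcal I}^{(k-1)}_j$ be $\tilde I^{(k-1)}_{j,j+1}$ computed with $m=i-1$ if $j\le 0$, and $\tilde I^{(k-1)}_{j-1,j}$ computed with $m=i$ if $j\ge1$; set $\tilde S_i=\sum_{k=1}^{2P}\frac{\Delta t^{k-1}}{k!}\sum_j\gamma^{0,1/2}_{P,j}\tilde{\mathcal I}^{(k-1)}_j$. (4) Update: $U^{n+1}_i=U^n_i+\frac{\Delta t}{\Delta x}\big(F_{i;i-1/2}-F_{i;i+1/2}+\tilde S_i\big)$. *)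

From HB Require Import structures.
From mathcomp Require Import all_boot all_order all_algebra.
From mathcomp Require Import all_classical all_reals all_analysis.
Set Implicit Arguments. Unset Strict Implicit. Unset Printing Implicit Defensive.
Import Order.TTheory GRing.Theory Num.Theory.
Import numFieldNormedType.Exports.
Local Open Scope ring_scope.

Section WBCAT.
Variable R : realType.

Definition nodes (P : nat) : seq int :=
  [seq (k%:Z - (P%:Z - 1)) | k <- iota 0 (2 * P)].

(* Lagrange basis polynomial (in the scaled variable s = (x - x0)/h)
   attached to node j for the nodes -P+1..P. *)
Definition lagr (P : nat) (j : int) : {poly R} :=
  \prod_(i <- nodes P | i != j)
     (('X - (i%:~R)%:P) * (((j - i)%:~R : R)^-1)%:P).

(* gamma^{k,q}_{P,j}: k-th derivative at q of the Lagrange basis polynomial;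
   (1/h^k) sum_j gamma f(x0+jh) is the k-th derivative at x0+qh of the
   interpolant of degree <= 2P-1. *)
Definition gam (P k : nat) (q : R) (j : int) : R := ((lagr P j)^`(k)).[q].

Definition prim (p : {poly R}) : {poly R} :=
  \poly_(i < (size p).+1) (if i is i'.+1 then p`_i' / i%:R else 0).

(* a^{m,j}_{P,l}: weights of the interpolatory rule
   int_{x_{m+j-1}}^{x_{m+j}} f ~ dx sum_l a f(x_{m+l}); on a uniform grid
   a = int_{j-1}^{j} L_l(s) ds, independent of m. *)
Definition aw (P : nat) (j l : int) : R :=
  let Q := prim (lagr P l) in Q.[j%:~R] - Q.[(j - 1)%:~R].

Variable d : nat.
Local Notation vec := 'rV[R]_d.

Definition stationary (F S : vec -> vec) (H : R -> R) (V : R -> vec) : Prop :=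
  forall x : R, derivable (F \o V) x 1 /\
                derive1 (F \o V) x = (derive1 H x) *: S (V x).

Variables (P : nat) (dx dt : R) (F S : vec -> vec) (H : R -> R).
(* eqsol x0 v : the stationary solution V with V(x0) = v selected by the scheme *)
Variable eqsol : R -> vec -> R -> vec.

Definition xn (l : int) : R := l%:~R * dx.
Definition Hx (y : R) : R := derive1 H y.

(* Cumulative integral  I_{-P+1,j} = sum_{s=-P+2}^{j} I_{s-1,s}. *)
Definition Icum (Iseg : int -> vec) (j : int) : vec :=
  \sum_(s <- nodes P | (- (P%:Z) + 2 <= s) && (s <= j)) Iseg s.

(* A level k: (F^{(k)}_j, Itilde^{(k)}_{j-1,j}) as functions of j. *)
Definition level := ((int -> vec) * (int -> vec))%type.

Section Local.
(* U : current grid values U^n ; Us : local equilibrium U^*_i ; m : stencil centre *)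
Variables (U : int -> vec) (Us : R -> vec) (m : int).

Definition lev0 : level :=
  (fun j => F (U (m + j)) - F (Us (xn (m + j))),
   fun j => dx *: \sum_(l <- nodes P)
              (aw P j l * Hx (xn (m + l))) *: (S (U (m + l)) - S (Us (xn (m + l))))).

Definition next (k : nat) (L : nat -> level) : level :=
  let Uder (q : nat) (j : int) : vec :=
    - (dx^-1 *: \sum_(s <- nodes P) gam P 1 j%:~R s *: (L q.-1).1 s)
    + dx^-1 *: \sum_(s <- nodes P) gam P 1 j%:~R s *: Icum (L q.-1).2 s in
  let Ukr (j r : int) : vec :=
    U (m + j) + \sum_(q <- iota 1 k)
                  ((r%:~R * dt) ^+ q / (q`!)%:R) *: Uder q j in
  (fun j => dt^-k *: \sum_(r <- nodes P) gam P k 0 r *: F (Ukr j r),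
   fun j => dt^-k *: \sum_(r <- nodes P) gam P k 0 r *:
              (dx *: \sum_(l <- nodes P)
                  (aw P j l * Hx (xn (m + l))) *: S (Ukr l r))).

Fixpoint levs (k : nat) : nat -> level :=
  match k with
  | 0 => fun _ => lev0
  | k'.+1 => let L := levs k' in
             fun q => if (q <= k')%N then L q else next k'.+1 L
  end.

Definition lvl (k : nat) : level := levs k k.

Definition flux : vec :=
  \sum_(k <- iota 1 (2 * P))
     (dt ^+ k.-1 / (k`!)%:R) *: \sum_(j <- nodes P) gam P 0 (2^-1) j *: (lvl k.-1).1 j.
End Local.

Definition Ustar (U : int -> vec) (i : int) : R -> vec := eqsol (xn i) (U i).

Definition source (U : int -> vec) (i : int) : vec :=
  \sum_(k <- iota 1 (2 * P))
     (dt ^+ k.-1 / (k`!)%:R) *: \sum_(j <- nodes P) gam P 0 (2^-1) j *: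
        (if j <= 0 then (lvl U (Ustar U i) (i - 1) k.-1).2 (j + 1)
         else (lvl U (Ustar U i) i k.-1).2 j).

Definition wbcat_step (U : int -> vec) : int -> vec :=
  fun i => U i + (dt / dx) *: (flux U (Ustar U i) (i - 1) - flux U (Ustar U i) i
                               + source U i).

Definition wbcat (U0 : int -> vec) (n : nat) : int -> vec := iter n wbcat_step U0.

End WBCAT.

(* On the stencils of nodes i-1 and i the grid data coincide with the local
   equilibrium U^*_i (uniqueness of the Cauchy problem), so the level-0
   differences of F and of S H_x between U and U^*_i vanish.  If all lower levels
   vanish, every time derivative U^{(q)} vanishes, the Taylor predictors
   U^{k,r}_j reduce to U_{m+j} independently of r, and each level-k quantity is
   (sum_r gamma^{k,0}_r) times a constant; this sum is 0 because the Lagrange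
   basis sums to 1.  Hence all fluxes and the source vanish and the equilibrium
   is a fixed point of one step. *)
From Pilot Require Import Defs.
From HB Require Import structures.
From mathcomp Require Import all_boot all_order all_algebra.
From mathcomp Require Import all_classical all_reals all_analysis.
From mathcomp Require Import zify.
Import Order.TTheory GRing.Theory Num.Theory.
Import numFieldNormedType.Exports.
Local Open Scope ring_scope.

Lemma mem_nodes {P : nat} {j : int} : j \in nodes P -> - (P%:Z) + 1 <= j <= P%:Z.
Proof.
case/mapP => k; rewrite mem_iota add0n => /andP[_ hk] ->.
apply/andP; split; lia.
Qed.

Lemma nodes_uniq (P : nat) : uniq (nodes P).
Proof. by rewrite map_inj_uniq ?iota_uniq // => a b /= h; lia. Qed.

Lemma size_nodes (P : nat) : size (nodes P) = (2 * P)%N.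
Proof. by rewrite size_map size_iota. Qed.

Section Lagrange.
Variables (R : realType) (P : nat).

Lemma lagr_node (i j : int) : i \in nodes P ->
  (lagr R P j).[i%:~R] = (i == j)%:R.
Proof.
move=> hi; rewrite /lagr horner_prod.
have [->|nij] := eqVneq i j.
  apply: big1 => k hk.
  rewrite hornerM hornerC hornerXsubC -rmorphB /= divff //.
  by rewrite intr_eq0 subr_eq0 eq_sym.
rewrite -big_filter (bigD1_seq i) /= ?filter_uniq ?nodes_uniq ?mem_filter ?nij ?hi //.
by rewrite hornerM hornerXsubC subrr !mul0r.
Qed.

Lemma size_lagr (j : int) : j \in nodes P -> (size (lagr R P j) <= 2 * P)%N.
Proof.
move=> hj; rewrite /lagr big_split /= -rmorph_prod mulrC mul_polyC.
apply: leq_trans (size_scale_leq _ _) _.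
rewrite -big_filter size_prod_XsubC -rem_filter ?nodes_uniq // size_rem //.
by have := mem_nodes hj; rewrite size_nodes; lia.
Qed.

Lemma lagr_sum : (0 < P)%N -> \sum_(j <- nodes P) lagr R P j = 1.
Proof.
move=> P_gt0; apply/eqP; rewrite -subr_eq0; apply/negPn/negP => hne.
have := max_poly_roots hne (rs := [seq (i%:~R : R) | i <- nodes P]).
have -> : all (root (\sum_(j <- nodes P) lagr R P j - 1))
              [seq (i%:~R : R) | i <- nodes P].
  apply/allP => _ /mapP[i hi ->]; rewrite /root hornerD hornerN hornerC horner_sum.
  rewrite (eq_bigr (fun j => (i == j)%:R)) => [|j _]; last by rewrite lagr_node.
  rewrite (bigD1_seq i) ?nodes_uniq //= eqxx big1 ?addr0 ?subrr //.
  by move=> j /negPf; rewrite eq_sym => ->.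
rewrite map_inj_uniq ?nodes_uniq; last exact: intr_inj.
rewrite size_map size_nodes => /(_ isT isT); apply/negP; rewrite -leqNgt.
apply: leq_trans (size_polyD _ _) _.
rewrite geq_max size_polyN size_poly1 (_ : (1 <= 2 * P)%N) ?andbT; last by rewrite muln_gt0.
rewrite big_seq; elim/big_ind: _ => [|p q hp hq|j /size_lagr //]; first by rewrite size_poly0.
by apply: leq_trans (size_polyD _ _) _; rewrite geq_max hp hq.
Qed.

Lemma gam_sum_eq0 (k : nat) (q : R) : (0 < P)%N -> (0 < k)%N ->
  \sum_(r <- nodes P) gam P k q r = 0.
Proof.
move=> P_gt0; case: k => // k _.
rewrite /gam -horner_sum -(big_morph _ (derivnD _) (raddf0 _)).
by rewrite lagr_sum // derivSn -polyC1 derivC raddf0 horner0.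
Qed.

End Lagrange.

Section Scheme.
Local Set Implicit Arguments.
Local Unset Strict Implicit.
Variables (R : realType) (d P : nat) (dx dt : R).
Variables (F S : 'rV[R]_d -> 'rV[R]_d) (H : R -> R).
Variable eqsol : R -> 'rV[R]_d -> R -> 'rV[R]_d.
Hypothesis P_gt0 : (0 < P)%N.

Definition level_vanishes (L : level R d) : Prop :=
  {in nodes P, forall j, L.1 j = 0} /\ forall j, L.2 j = 0.

Lemma next_vanishes U m k (L : nat -> level R d) : (0 < k)%N ->
  (forall q, level_vanishes (L q)) ->
  level_vanishes (Defs.next P dx dt F S H U m k L).
Proof.
move=> k_gt0 hL.
have predictor_trivial j (r : int) :
    U (m + j) + \sum_(q <- iota 1 k) ((r%:~R * dt) ^+ q / (q`!)%:R) *: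
      (- (dx^-1 *: \sum_(s <- nodes P) gam P 1 j%:~R s *: (L q.-1).1 s)
       + dx^-1 *: \sum_(s <- nodes P) gam P 1 j%:~R s *: Icum P (L q.-1).2 s)
    = U (m + j).
  rewrite big1 ?addr0 // => q _.
  have [hL1 hL2] := hL q.-1.
  rewrite big_seq big1 => [|s /hL1 ->]; last by rewrite scaler0.
  rewrite big1 => [|s _]; last by rewrite /Icum big1 ?scaler0 // => t _; rewrite hL2.
  by rewrite !scaler0 oppr0 addr0 scaler0.
split=> [j _|j] /=.
  under eq_bigr do rewrite predictor_trivial.
  by rewrite -scaler_suml gam_sum_eq0 // scale0r scaler0.
under eq_bigr do under eq_bigr do rewrite predictor_trivial.
by rewrite -scaler_suml gam_sum_eq0 // scale0r scaler0.
Qed.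

Section Stencil.
Variables (U : int -> 'rV[R]_d) (Us : R -> 'rV[R]_d) (m : int).
Hypothesis U_eq : {in nodes P, forall j, U (m + j) = Us (xn dx (m + j))}.

Lemma levs_vanish k q : level_vanishes (levs P dx dt F S H U Us m k q).
Proof.
elim: k q => [|k IH] q /=.
  split=> [j /U_eq /= ->|j /=]; first by rewrite subrr.
  by rewrite big_seq big1 ?scaler0 // => l /U_eq ->; rewrite subrr scaler0.
by case: ifP => _; [exact: IH | exact: next_vanishes].
Qed.

Lemma flux_eq0 : flux P dx dt F S H U Us m = 0.
Proof.
rewrite /flux big1 // => k _.
by rewrite big_seq big1 ?scaler0 // => j /(proj1 (levs_vanish _ _)) ->; rewrite scaler0.
Qed.

End Stencil.

Lemma wbcat_step_id U :
  (forall i m, m \in [:: i - 1; i] ->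
     {in nodes P, forall j, U (m + j) = Ustar dx eqsol U i (xn dx (m + j))}) ->
  wbcat_step P dx dt F S H eqsol U =1 U.
Proof.
move=> U_eq i; have lv m hm := levs_vanish (U_eq i m hm).
have flux0 m (hm : m \in [:: i - 1; i]) :
  flux P dx dt F S H U (Ustar dx eqsol U i) m = 0 := flux_eq0 (U_eq i m hm).
have source0 : source P dx dt F S H eqsol U i = 0.
  rewrite /source big1 // => k _; rewrite big1 ?scaler0 // => j _.
  by case: ifP => _; rewrite (proj2 (lv _ _ _ _)) ?scaler0 ?inE ?eqxx ?orbT.
rewrite /wbcat_step source0 !flux0 ?inE ?eqxx ?orbT //.
by rewrite subrr add0r scaler0 addr0.
Qed.

End Scheme.

Theorem mainTheorem1 (R : realType) (d P : nat) (dx dt : R)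
    (F S : 'rV[R]_d -> 'rV[R]_d) (H : R -> R)
    (eqsol : R -> 'rV[R]_d -> R -> 'rV[R]_d) (Ust : R -> 'rV[R]_d) :
  (1 <= P)%N -> 0 < dx -> 0 < dt ->
  continuous Ust ->
  stationary F S H Ust ->
  (* the scheme's local equilibrium at node i is a stationary solution
     through (x_i, U^*(x_i)) *)
  (forall i : int,
      stationary F S H (eqsol (xn dx i) (Ust (xn dx i))) /\
      eqsol (xn dx i) (Ust (xn dx i)) (xn dx i) = Ust (xn dx i)) ->
  (* uniqueness of the Cauchy problem on the nodes used by the scheme *)
  (forall (i : int) (V : R -> 'rV[R]_d),
      stationary F S H V -> V (xn dx i) = Ust (xn dx i) ->
      forall l : int, - (P%:Z) <= l <= P%:Z ->
        V (xn dx (i + l)) = Ust (xn dx (i + l))) ->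
  forall (n : nat) (i : int),
    wbcat P dx dt F S H eqsol (fun l => Ust (xn dx l)) n i = Ust (xn dx i).
Proof.
move=> P_gt0 _ _ _ _ eqsol_through cauchy_uniq n i.
set U0 := fun l => Ust (xn dx l).
suff step_id : wbcat_step P dx dt F S H eqsol U0 = U0 by rewrite /wbcat iter_fix.
apply/funext; apply: wbcat_step_id => // k m hm j /mem_nodes hj.
have [st_k eq_k] := eqsol_through k.
have near_k : - (P%:Z) <= m + j - k <= P%:Z.
  by move: hm; rewrite !inE => /orP[] /eqP ->; apply/andP; split; lia.
by have := cauchy_uniq k _ st_k eq_k _ near_k; rewrite addrC subrK.
Qed.
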